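(* Let $S$ be epsilon-strongly graded and let $r$ be a minimal element of $B(\mathcal{E}_G)^*$. Then the following are equivalent: (i) $r$ is $\gamma$-invariant, i.e. $\gamma_g(r\epsilon_{g^{-1}})=r\epsilon_g$ for all $g\in G$; (ii) $r\in Z(S)$; (iii) $N(r)=\{g\in G: r\epsilon_g=r\}$ is a subgroup of $G$.
   Context: $G$ is a group with identity $e$; $S=\bigoplus_{g\in G}S_g$ is an associative unital ring graded by $G$, $R=S_e$, $XY$ denotes finite sums of products. $S$ is epsilon-strongly graded: for each $g\in G$ the ideal $S_gS_{g^{-1}}$ of $R$ has an identity element $\epsilon_g$ satisfying $\epsilon_gs=s=s\epsilon_{g^{-1}}$ for all $s\in S_g$; $\epsilon_e=1_S$. Each $\epsilon_g$ is an idempotent in the center $Z(R)$ of $R$. For each $g$ fix $n_g\in\mathbb{N}$, $u_g^{(i)}\in S_g$, $v_{g^{-1}}^{(i)}\in S_{g^{-1}}$ with $\sum_{i=1}^{n_g}u_g^{(i)}v_{g^{-1}}^{(i)}=\epsilon_g$ (with $n_e=1$, $u_e^{(1)}=v_e^{(1)}=1$), and define $\gamma_g:S\to S$, $\gamma_g(s)=\sum_{i=1}^{n_g}u_g^{(i)}sv_{g^{-1}}^{(i)}$. $\mathcal{E}_G=\{\epsilon_g:g\in G\}$, $B(\mathcal{E}_G)$ is the multiplicative (Boolean) semigroup generated by $\mathcal{E}_G$, and $B(\mathcal{E}_G)^*=B(\mathcal{E}_G)\setminus\{0\}$, partially ordered by $a\le b$ iff $a=ab$. $Z(S)$ denotes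 the center of $S$. *)

From mathcomp Require Import all_boot all_algebra.
Set Implicit Arguments. Unset Strict Implicit. Unset Printing Implicit Defensive.
Import GRing.Theory.
Local Open Scope ring_scope.

Record group := Group {
  gcar :> Type;
  gmul : gcar -> gcar -> gcar;
  ginv : gcar -> gcar;
  gone : gcar;
  gmulA : forall x y z, gmul x (gmul y z) = gmul (gmul x y) z;
  gmul1 : forall x, gmul gone x = x /\ gmul x gone = x;
  gmulV : forall x, gmul x (ginv x) = gone /\ gmul (ginv x) x = gone
}.

Section Graded.
Variables (G : group) (S : pzRingType).

Definition is_graded (Sg : G -> S -> Prop) : Prop :=
  (forall g, Sg g 0 /\ forall x y, Sg g x -> Sg g y -> Sg g (x - y)) /\
  (forall g h x y, Sg g x -> Sg h y -> Sg (gmul g h) (x * y)) /\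
  (forall s, exists n (gs : 'I_n -> G) (xs : 'I_n -> S),
      (forall i, Sg (gs i) (xs i)) /\ s = \sum_(i < n) xs i) /\
  (forall n (gs : 'I_n -> G) (xs : 'I_n -> S),
      (forall i j, gs i = gs j -> i = j) ->
      (forall i, Sg (gs i) (xs i)) -> \sum_(i < n) xs i = 0 ->
      forall i, xs i = 0).

Definition prodset (X Y : S -> Prop) (z : S) : Prop :=
  exists n (xs ys : 'I_n -> S), (forall i, X (xs i) /\ Y (ys i)) /\
    z = \sum_(i < n) xs i * ys i.

Definition eps_strongly_graded (Sg : G -> S -> Prop) (eps : G -> S) : Prop :=
  is_graded Sg /\
  forall g,
    prodset (Sg g) (Sg (ginv g)) (eps g) /\
    (forall x, prodset (Sg g) (Sg (ginv g)) x -> eps g * x = x /\ x * eps g = x) /\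
    (forall s, Sg g s -> eps g * s = s /\ s * eps (ginv g) = s).

Definition gamma (nn : G -> nat) (u v : forall g, 'I_(nn g) -> S) (g : G) (s : S) : S :=
  \sum_(i < nn g) u g i * s * v g i.

(* B(E_G): multiplicative semigroup generated by {eps g | g in G} *)
Definition inB (eps : G -> S) (x : S) : Prop :=
  exists n (gs : 'I_n.+1 -> G), x = \prod_(i < n.+1) eps (gs i).

Definition inBstar (eps : G -> S) (x : S) : Prop := inB eps x /\ x <> 0.

Definition Ble (a b : S) : Prop := a = a * b.

Definition minimal_Bstar (eps : G -> S) (r : S) : Prop :=
  inBstar eps r /\ forall a, inBstar eps a -> Ble a r -> a = r.

Definition in_center (r : S) : Prop := forall s : S, r * s = s * r.

Definition is_subgroup (H : G -> Prop) : Prop :=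
  H (gone G) /\ (forall x y, H x -> H y -> H (gmul x y)) /\
  (forall x, H x -> H (ginv x)).

End Graded.

From mathcomp Require Import all_boot all_algebra.
Import GRing.Theory.
Local Open Scope ring_scope.

Set Implicit Arguments.
Unset Strict Implicit.
Unset Printing Implicit Defensive.

(* Everything rests on a few facts about the idempotents eps g:
   each eps g lies in R = S_e, and for s in S_g we have the "shift rule"
   s eps_h = eps_{gh} s; in particular the eps g commute with R, so
   products of them (the elements of B(E_G)) are idempotents commuting
   with R.  For a minimal r in B(E_G)^* this gives the dichotomy
   r eps_g in {0, r}, and r eps_g = 0 forces r s = 0 for s in S_g.
   Centrality of r only has to be checked on homogeneous elements:
   (i)  => (ii): r s = gamma_g(r eps_{g^-1}) s, and r eps_{g^-1} commutes
        with the degree-e elements v s;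
   (ii) => (i): gamma_g acts on central elements as multiplication by eps g;
   (ii) => (iii): the dichotomy plus the annihilation rule;
   (iii) => (ii): for g in N(r), shifting r = prod eps_{g_i} across s in S_g
        twists the indices g_i by g^{+-1}, which stay in N(r). *)

Section GroupFacts.
Variable G : group.

Lemma gmul1l (x : G) : gmul (gone G) x = x. Proof. exact: proj1 (gmul1 x). Qed.
Lemma gmul1r (x : G) : gmul x (gone G) = x. Proof. exact: proj2 (gmul1 x). Qed.
Lemma gmulVr (x : G) : gmul x (ginv x) = gone G. Proof. exact: proj1 (gmulV x). Qed.
Lemma gmulVl (x : G) : gmul (ginv x) x = gone G. Proof. exact: proj2 (gmulV x). Qed.

Lemma ginv_uniq (x y : G) : gmul x y = gone G -> y = ginv x.
Proof. by move=> xy; rewrite -[y]gmul1l -(gmulVl x) -gmulA xy gmul1r. Qed.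

Lemma ginvK (g : G) : ginv (ginv g) = g.
Proof. by symmetry; apply: ginv_uniq; rewrite gmulVl. Qed.

Lemma ginvM (g h : G) : ginv (gmul g h) = gmul (ginv h) (ginv g).
Proof.
by symmetry; apply: ginv_uniq; rewrite gmulA -(gmulA g h) gmulVr gmul1r gmulVr.
Qed.

Lemma gmulVK (g h : G) : gmul g (gmul (ginv g) h) = h.
Proof. by rewrite gmulA gmulVr gmul1l. Qed.

End GroupFacts.

Lemma commute_via_twists (R : pzRingType) (r x p q : R) :
  r * x = x * q -> x * r = p * x -> r * p = r -> r * q = r ->
  q * r = r * q -> r * x = x * r.
Proof.
move=> rx xr rp rq qr.
transitivity (r * x * r); first by rewrite -mulrA xr mulrA rp.
by rewrite rx -mulrA qr rq.
Qed.

Section EpsStronglyGraded.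
Variables (G : group) (S : pzRingType) (Sg : G -> S -> Prop) (eps : G -> S).
Hypothesis Heps : eps_strongly_graded Sg eps.
Local Notation e := (gone G).

Lemma Sg_zero g : Sg g 0.
Proof. by case: Heps => [[Hsub _] _]; case: (Hsub g). Qed.

Lemma Sg_sub g x y : Sg g x -> Sg g y -> Sg g (x - y).
Proof. by case: Heps => [[Hsub _] _]; case: (Hsub g) => _; apply. Qed.

Lemma Sg_add g x y : Sg g x -> Sg g y -> Sg g (x + y).
Proof.
move=> hx hy; rewrite -[y]opprK; apply: Sg_sub => //.
by rewrite -sub0r; apply: Sg_sub => //; exact: Sg_zero.
Qed.

Lemma Sg_sum g m (F : 'I_m -> S) :
  (forall i, Sg g (F i)) -> Sg g (\sum_(i < m) F i).
Proof. by move=> hF; apply: (big_ind (Sg g)) => //; [exact: Sg_zero | exact: Sg_add]. Qed.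

Lemma Sg_mul g h x y : Sg g x -> Sg h y -> Sg (gmul g h) (x * y).
Proof. by case: Heps => [[_ [Hmul _]] _]; apply: Hmul. Qed.

Lemma Sg_decompose s : exists n (gs : 'I_n -> G) (xs : 'I_n -> S),
  (forall i, Sg (gs i) (xs i)) /\ s = \sum_(i < n) xs i.
Proof. by case: Heps => [[_ [_ [Hsum _]]] _]; apply: Hsum. Qed.

Lemma eps_decompose g : prodset (Sg g) (Sg (ginv g)) (eps g).
Proof. by case: Heps => _ /(_ g) []. Qed.

Lemma eps_mull g s : Sg g s -> eps g * s = s.
Proof. by case: Heps => _ /(_ g) [_ [_ /(_ s)]] H /H []. Qed.

Lemma eps_mulr g s : Sg g s -> s * eps (ginv g) = s.
Proof. by case: Heps => _ /(_ g) [_ [_ /(_ s)]] H /H []. Qed.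

Lemma eps_mulrV g s : Sg (ginv g) s -> s * eps g = s.
Proof. by rewrite -{2}(ginvK g); exact: eps_mulr. Qed.

Lemma eps_idem g : eps g * eps g = eps g.
Proof.
by case: Heps => _ /(_ g) [Hdec [/(_ _ Hdec) [-> _] _]].
Qed.

(* eps g is a sum of products S_g S_{g^-1}, hence lies in R = S_e. *)
Lemma eps_in_e g : Sg e (eps g).
Proof.
have [m [xs [ys [hxy ->]]]] := eps_decompose g.
by apply: Sg_sum => i; rewrite -(gmulVr g); apply: Sg_mul; apply hxy.
Qed.

Lemma eps_shift g h s : Sg g s -> s * eps h = eps (gmul g h) * s.
Proof.
move=> hs.
have fix_left : eps (gmul g h) * (s * eps h) = s * eps h.
  have [m [a [b [hab ->]]]] := eps_decompose h.
  rewrite !mulr_sumr; apply: eq_bigr => i _.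
  rewrite !mulrA -(mulrA _ s) eps_mull //; exact: Sg_mul hs (proj1 (hab i)).
have fix_right : eps (gmul g h) * s * eps h = eps (gmul g h) * s.
  have [m [c [d [hcd ->]]]] := eps_decompose (gmul g h).
  rewrite !mulr_suml; apply: eq_bigr => i _.
  rewrite -!mulrA (mulrA (d i) s) eps_mulrV //.
  have := Sg_mul (proj2 (hcd i)) hs.
  by rewrite ginvM -gmulA gmulVl gmul1r.
by rewrite -fix_right -mulrA fix_left.
Qed.

Lemma eps_comm_e g x : Sg e x -> eps g * x = x * eps g.
Proof. by move=> hx; rewrite (eps_shift g hx) gmul1l. Qed.

Lemma homog_central r :
  (forall g x, Sg g x -> r * x = x * r) -> in_center r.
Proof.
move=> H s; have [m [gs [xs [hx ->]]]] := Sg_decompose s.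
by rewrite mulr_sumr mulr_suml; apply: eq_bigr => i _; exact: H (hx i).
Qed.

Lemma annihilate r k s : r * eps k = 0 -> Sg k s -> r * s = 0.
Proof. by move=> rk hs; rewrite -(eps_mull hs) mulrA rk mul0r. Qed.

Lemma prod_eps_comm (I : Type) (F : I -> G) (l : seq I) y :
  (forall g, y * eps g = eps g * y) ->
  y * \prod_(i <- l) eps (F i) = \prod_(i <- l) eps (F i) * y.
Proof.
move=> yC; apply: (big_ind (fun p => y * p = p * y)) => //.
- by rewrite mulr1 mul1r.
- by move=> a b ha hb; rewrite mulrA ha -mulrA hb mulrA.
Qed.

Lemma prod_eps_comm_e (I : Type) (F : I -> G) (l : seq I) y :
  Sg e y -> \prod_(i <- l) eps (F i) * y = y * \prod_(i <- l) eps (F i).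
Proof. by move=> hy; rewrite prod_eps_comm // => g; rewrite eps_comm_e. Qed.

Lemma prod_eps_idem (I : Type) (F : I -> G) (l : seq I) :
  \prod_(i <- l) eps (F i) * \prod_(i <- l) eps (F i) = \prod_(i <- l) eps (F i).
Proof.
elim: l => [|a l IH]; first by rewrite big_nil mulr1.
rewrite big_cons -mulrA (mulrA (\prod_(i <- l) _)) (prod_eps_comm_e _ _ (eps_in_e _)).
by rewrite -mulrA IH mulrA eps_idem.
Qed.

Lemma prod_eps_absorb (I : eqType) (F : I -> G) (l : seq I) h : h \in l ->
  \prod_(i <- l) eps (F i) * eps (F h) = \prod_(i <- l) eps (F i).
Proof.
elim: l => [//|a l IH]; rewrite in_cons big_cons => /orP [/eqP ->|hl].
  by rewrite -mulrA (prod_eps_comm_e _ _ (eps_in_e _)) mulrA eps_idem.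
by rewrite -mulrA IH.
Qed.

Lemma prod_eps_shift (I : Type) (F : I -> G) (l : seq I) g x : Sg g x ->
  x * \prod_(i <- l) eps (F i) = \prod_(i <- l) eps (gmul g (F i)) * x.
Proof.
move=> hx; apply: (big_ind2 (fun a b => x * a = b * x)).
- by rewrite mul1r mulr1.
- by move=> a1 a2 b1 b2 h1 h2; rewrite mulrA h1 -mulrA h2 mulrA.
- by move=> i _; exact: eps_shift.
Qed.

Lemma prod_eps_shiftV (I : Type) (F : I -> G) (l : seq I) g x : Sg g x ->
  \prod_(i <- l) eps (F i) * x = x * \prod_(i <- l) eps (gmul (ginv g) (F i)).
Proof.
move=> hx; rewrite (prod_eps_shift (fun i => gmul (ginv g) (F i)) l hx).
by congr (_ * _); apply: eq_bigr => i _; rewrite gmulVK.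
Qed.

Lemma stab_prod (I : Type) (F : I -> G) (l : seq I) r :
  (forall i, r * eps (F i) = r) -> r * \prod_(i <- l) eps (F i) = r.
Proof.
move=> hF; apply: (big_ind (fun y => r * y = r)) => //; first by rewrite mulr1.
by move=> a b ha hb; rewrite mulrA ha hb.
Qed.

Section Minimal.
Variable r : S.
Hypothesis Hr : minimal_Bstar eps r.

Lemma minimal_nonzero : r <> 0.
Proof. by case: Hr => [[_ nz] _]. Qed.

Lemma minimal_gen : exists n (gs : 'I_n.+1 -> G),
  r = \prod_(i < n.+1) eps (gs i) /\ forall i, r * eps (gs i) = r.
Proof.
case: Hr => [[[n [gs r_def]] _] _]; exists n, gs; split => // i.
by rewrite r_def; apply: prod_eps_absorb; exact: mem_index_enum.
Qed.

Lemma minimal_comm_e y : Sg e y -> r * y = y * r.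
Proof. by have [n [gs [-> _]]] := minimal_gen; move/prod_eps_comm_e ->. Qed.

Lemma minimal_idem : r * r = r.
Proof. by have [n [gs [-> _]]] := minimal_gen; exact: prod_eps_idem. Qed.

Lemma minimal_eps_comm g : r * eps g = eps g * r.
Proof. exact/minimal_comm_e/eps_in_e. Qed.

(* Minimality: r eps g is again in B(E_G) and below r, so it is 0 or r. *)
Lemma minimal_dichotomy g : r * eps g = 0 \/ r * eps g = r.
Proof.
case: (eqVneq (r * eps g) 0) => [->|hne]; [by left | right].
case: Hr => [[[n [gs r_def]] _] Hmin]; apply: Hmin; last first.
  by rewrite /Ble -mulrA -minimal_eps_comm mulrA minimal_idem.
split; last exact/eqP.
exists n.+1, (fun i : 'I_n.+2 => if (i < n.+1)%N then gs (inord i) else g).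
rewrite big_ord_recr /= ltnn r_def; congr (_ * _); apply: eq_bigr => i _.
by rewrite /= ltn_ord inord_val.
Qed.

Lemma comm_annihilated g x :
  r * eps g = 0 -> r * eps (ginv g) = 0 -> Sg g x -> r * x = x * r.
Proof.
move=> hg hg' hx; rewrite (annihilate hg hx) -(eps_mulr hx) -mulrA.
by rewrite -minimal_eps_comm hg' mulr0.
Qed.

Lemma comm_stable g x : is_subgroup (fun k : G => r * eps k = r) ->
  r * eps g = r -> Sg g x -> r * x = x * r.
Proof.
case=> _ [stabM stabV] hg hx.
have [n [gs [r_def r_gs]]] := minimal_gen.
apply: (@commute_via_twists _ r x
  (\prod_(i < n.+1) eps (gmul g (gs i)))
  (\prod_(i < n.+1) eps (gmul (ginv g) (gs i)))).
- by rewrite {1}r_def; exact: prod_eps_shiftV.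
- by rewrite {1}r_def; exact: prod_eps_shift.
- by apply: stab_prod => i; exact: stabM.
- by apply: stab_prod => i; apply: stabM => //; exact: stabV.
- by rewrite prod_eps_comm //; exact: minimal_eps_comm.
Qed.

Lemma stabilizer_subgroup_central :
  is_subgroup (fun g : G => r * eps g = r) -> in_center r.
Proof.
move=> Hsub; apply: homog_central => g x hx.
case: (minimal_dichotomy g) => hg; last exact: comm_stable Hsub hg hx.
apply: (comm_annihilated hg _ hx); case: (minimal_dichotomy (ginv g)) => [-> //|hg'].
exfalso; apply: minimal_nonzero; case: Hsub => _ [_ stabV].
by have := stabV _ hg'; rewrite ginvK hg.
Qed.

End Minimal.

Section Gamma.
(* The degree g stays an explicit argument of u, v and of their hypotheses. *)
Unset Implicit Arguments.
Variable nn : G -> nat.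
Variables u v : forall g : G, 'I_(nn g) -> S.
Hypotheses (Hu : forall g i, Sg g (u g i)) (Hv : forall g i, Sg (ginv g) (v g i)).
Hypothesis Huv : forall g, \sum_(i < nn g) u g i * v g i = eps g.
Set Implicit Arguments.

Lemma eps_one : nn e = 1%N -> (forall i, u e i = 1 /\ v e i = 1) -> eps e = 1.
Proof.
move=> n1 uv1; rewrite -Huv (eq_bigr (fun _ => 1)).
  by rewrite sumr_const card_ord n1.
by move=> i _; case: (uv1 i) => -> ->; rewrite mulr1.
Qed.

Lemma gamma_central x g : in_center x -> gamma u v g x = x * eps g.
Proof.
move=> xC; rewrite /gamma -Huv mulr_sumr; apply: eq_bigr => i _.
by rewrite -xC mulrA.
Qed.

Lemma gamma_eps_inv x g : gamma u v g (x * eps (ginv g)) = gamma u v g x.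
Proof.
by rewrite /gamma; apply: eq_bigr => i _; rewrite -!mulrA (eps_mull (Hv g i)).
Qed.

Lemma central_gamma_invariant x : in_center x ->
  forall g, gamma u v g (x * eps (ginv g)) = x * eps g.
Proof. by move=> xC g; rewrite gamma_eps_inv gamma_central. Qed.

Section MinimalGamma.
Variable r : S.
Hypothesis Hr : minimal_Bstar eps r.

Lemma gamma_invariant_central :
  (forall g, gamma u v g (r * eps (ginv g)) = r * eps g) -> in_center r.
Proof.
move=> Hinv; apply: homog_central => g x hx.
have cC y : Sg e y -> r * eps (ginv g) * y = y * (r * eps (ginv g)).
  by move=> hy; rewrite -mulrA (eps_comm_e _ hy) mulrA (minimal_comm_e Hr hy) -mulrA.
rewrite -{1}(eps_mull hx) mulrA -Hinv /gamma mulr_suml.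
have -> : \sum_(i < nn g) u g i * (r * eps (ginv g)) * v g i * x =
          \sum_(i < nn g) u g i * v g i * x * (r * eps (ginv g)).
  apply: eq_bigr => i _; rewrite -(mulrA _ (v g i)) -(mulrA (u g i)) cC.
    by rewrite !mulrA.
  by rewrite -(gmulVl g); exact: Sg_mul (Hv g i) hx.
by rewrite -!mulr_suml Huv (eps_mull hx) (minimal_eps_comm Hr) mulrA (eps_mulr hx).
Qed.

Lemma central_stabilizer_subgroup : eps e = 1 ->
  in_center r -> is_subgroup (fun g : G => r * eps g = r).
Proof.
move=> eps_e rC; split; first by rewrite eps_e mulr1.
split.
- move=> g h hg hh; case: (minimal_dichotomy Hr (gmul g h)) => [hgh|-> //].
  exfalso; apply: (minimal_nonzero Hr).
  rewrite -hg -(gamma_central g rC) -hh -(gamma_central h rC) /gamma.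
  apply: big1 => i _; rewrite mulr_sumr mulr_suml; apply: big1 => j _.
  rewrite !mulrA -(rC (u g i * u h j)).
  by rewrite (annihilate hgh (Sg_mul (Hu g i) (Hu h j))) !mul0r.
- move=> g hg; case: (minimal_dichotomy Hr (ginv g)) => [hg'|-> //].
  exfalso; apply: (minimal_nonzero Hr).
  rewrite -hg -(gamma_central g rC) /gamma; apply: big1 => i _.
  by rewrite -mulrA (annihilate hg' (Hv g i)) mulr0.
Qed.

End MinimalGamma.
End Gamma.
End EpsStronglyGraded.

Theorem mainTheorem8 (G : group) (S : pzRingType)
  (Sg : G -> S -> Prop) (eps : G -> S)
  (Heps : eps_strongly_graded Sg eps)
  (nn : G -> nat) (u v : forall g : G, 'I_(nn g) -> S)
  (Hu : forall g i, Sg g (u g i))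
  (Hv : forall g i, Sg (ginv g) (v g i))
  (Huv : forall g, \sum_(i < nn g) u g i * v g i = eps g)
  (He : nn (gone G) = 1%N /\
        forall i, u (gone G) i = 1 /\ v (gone G) i = 1)
  (r : S) (Hr : minimal_Bstar eps r) :
  ((forall g : G, gamma u v g (r * eps (ginv g)) = r * eps g) <-> in_center r) /\
  (in_center r <-> is_subgroup (fun g : G => r * eps g = r)).
Proof.
have eps_e : eps (gone G) = 1 by case: He; exact: eps_one.
split; split.
- exact: (gamma_invariant_central Heps Hv Huv Hr).
- exact: (central_gamma_invariant Heps Hv Huv).
- exact: (central_stabilizer_subgroup Heps Hu Hv Huv Hr eps_e).
- exact: (stabilizer_subgroup_central Heps Hr).
Qed.
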